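(* Consider the single-element, single-slab periodic space-time SBP scheme: unknowns $\boldsymbol\rho,\boldsymbol g_1,\dots,\boldsymbol g_{n_v}\in\mathbb R^{(n_t+1)(n_x+1)}$ satisfying $$\mathsf D_t\boldsymbol\rho+\tilde{\mathsf D}_x\langle v\boldsymbol g\rangle=-\sigma_a\boldsymbol\rho-\mathsf H_t^{-1}\mathsf t_B\mathsf t_B^\top(\boldsymbol\rho-\boldsymbol\rho(0)),$$ $$\mathsf D_t\boldsymbol g_k+\tfrac{v_k}{\varepsilon}\tilde{\mathsf D}_x\boldsymbol g_k-\tfrac1\varepsilon\langle v\tilde{\mathsf D}_x\boldsymbol g\rangle+\tfrac{v_k}{\varepsilon^2}\tilde{\mathsf D}_x\boldsymbol\rho=-\Big(\tfrac{\sigma_s}{\varepsilon^2}+\sigma_a\Big)\boldsymbol g_k-\mathsf H_t^{-1}\mathsf t_B\mathsf t_B^\top(\boldsymbol g_k-\boldsymbol g_k(0)),\quad k=1,\dots,n_v,$$ where the initial data satisfy $\langle\boldsymbol g(0)\rangle=0$. Then every solution satisfies $\langle\boldsymbol g\rangle=\sum_{k=1}^{n_v}\omega_k\boldsymbol g_k=0$.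
   Context: SBP operators: on nodes $x_0<\dots<x_n$, a matrix $\bar{\mathsf D}$ is a degree-$p$ SBP approximation of $d/dx$ if $\bar{\mathsf D}\boldsymbol x^k=k\boldsymbol x^{k-1}$ for $0\le k\le p$ (with $\boldsymbol x^k$ the vector of $x_i^k$), $\bar{\mathsf D}=\bar{\mathsf H}^{-1}\bar{\mathsf Q}$ with $\bar{\mathsf H}$ symmetric positive definite (here always diagonal), and $\bar{\mathsf Q}+\bar{\mathsf Q}^\top=\bar{\mathsf E}=\bar{\boldsymbol t}_R\bar{\boldsymbol t}_R^\top-\bar{\boldsymbol t}_L\bar{\boldsymbol t}_L^\top=\mathrm{diag}(-1,0,\dots,0,1)$, $\bar{\boldsymbol t}_L=(1,0,\dots,0)^\top$, $\bar{\boldsymbol t}_R=(0,\dots,0,1)^\top$. Let $\bar{\mathsf D}_x=\bar{\mathsf H}_x^{-1}\bar{\mathsf Q}_x$ be such an operator on $n_x+1$ spatial nodes (boundary vectors $\bar{\boldsymbol t}_L,\bar{\boldsymbol t}_R$) and $\bar{\mathsf D}_t=\bar{\mathsf H}_t^{-1}\bar{\mathsf Q}_t$ one on $n_t+1$ temporal nodes, with boundary vectors $\bar{\boldsymbol t}_B=(1,0,\dots,0)^\top$, $\bar{\boldsymbol t}_T=(0,\dots,0,1)^\top$. With $\mathsf I_{n_x},\mathsf I_{n_t}$ identities of size $n_x+1,n_t+1$: $\mathsf D_t=\bar{\mathsf D}_t\otimes\mathsf I_{n_x}$, $\mathsf D_x=\mathsf I_{n_t}\otimes\bar{\mathsf D}_x$,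 $\mathsf H=\bar{\mathsf H}_t\otimes\bar{\mathsf H}_x$, $\mathsf Q_t=\bar{\mathsf Q}_t\otimes\bar{\mathsf H}_x$, $\mathsf H_t=\bar{\mathsf H}_t\otimes\mathsf I_{n_x}$, $\mathsf H_x=\mathsf I_{n_t}\otimes\bar{\mathsf H}_x$, $\mathsf t_R=\mathsf I_{n_t}\otimes\bar{\boldsymbol t}_R$, $\mathsf t_L=\mathsf I_{n_t}\otimes\bar{\boldsymbol t}_L$, $\mathsf t_B=\bar{\boldsymbol t}_B\otimes\mathsf I_{n_x}$, $\mathsf t_T=\bar{\boldsymbol t}_T\otimes\mathsf I_{n_x}$. The periodic operator is $\tilde{\mathsf D}_x=\mathsf D_x-\frac12\mathsf H_x^{-1}\big(\mathsf t_R(\mathsf t_R^\top-\mathsf t_L^\top)-\mathsf t_L(\mathsf t_L^\top-\mathsf t_R^\top)\big)$. Velocity discretization: nodes $v_1,\dots,v_{n_v}$ and weights $\omega_k$ with $\sum_k\omega_k=1$ and $\sum_k\omega_kv_k=0$; for vectors indexed by $k$, $\langle\boldsymbol a\rangle=\sum_k\omega_k\boldsymbol a_k$ (e.g. $\langle v\boldsymbol g\rangle=\sum_k\omega_kv_k\boldsymbol g_k$, $\langle v\tilde{\mathsf D}_x\boldsymbol g\rangle=\sum_k\omega_kv_k\tilde{\mathsf D}_x\boldsymbol g_k$). Parameters: $\varepsilon>0$, $\sigma_s>0$, $\sigma_a\ge0$. $\boldsymbol\rho(0),\boldsymbol g_k(0)$ are given vectors representing the initial data. *)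

From mathcomp Require Import all_boot all_order all_algebra.
From mathcomp Require Export mxtens.
Set Implicit Arguments. Unset Strict Implicit. Unset Printing Implicit Defensive.
Import Order.TTheory GRing.Theory Num.Theory.
Local Open Scope ring_scope.

Section Defs.
Variable R : realFieldType.

(* boundary vectors on n+1 nodes: t_L = t_B = e_0, t_R = t_T = e_n *)
Definition tLv (n : nat) : 'cV[R]_n.+1 := \col_i (i == ord0)%:R.
Definition tRv (n : nat) : 'cV[R]_n.+1 := \col_i (i == ord_max)%:R.

Definition xpow (n : nat) (x : 'I_n.+1 -> R) (k : nat) : 'cV[R]_n.+1 :=
  \col_i (x i ^+ k).

Definition SBP (n : nat) (x : 'I_n.+1 -> R) (p : nat) (H Q : 'M[R]_n.+1) : Prop :=
  [/\ (forall i j : 'I_n.+1, (i < j)%N -> x i < x j),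
      is_diag_mx H,
      (forall i, 0 < H i i),
      Q + Q^T = tRv n *m (tRv n)^T - tLv n *m (tLv n)^T
    & forall k, (k <= p)%N -> (invmx H *m Q) *m xpow x k = k%:R *: xpow x k.-1].

(* space-time operators; unknown vectors have (n_t+1)(n_x+1) entries,
   indexed time-major as in the Kronecker product. *)
Definition Dtime nt nx (Ht Qt : 'M[R]_nt.+1) : 'M[R]_(nt.+1 * nx.+1) :=
  (invmx Ht *m Qt) *t (1%:M : 'M[R]_nx.+1).
Definition Dspace nt nx (Hx Qx : 'M[R]_nx.+1) : 'M[R]_(nt.+1 * nx.+1) :=
  (1%:M : 'M[R]_nt.+1) *t (invmx Hx *m Qx).
Definition Htime nt nx (Ht : 'M[R]_nt.+1) : 'M[R]_(nt.+1 * nx.+1) :=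
  Ht *t (1%:M : 'M[R]_nx.+1).
Definition Hspace nt nx (Hx : 'M[R]_nx.+1) : 'M[R]_(nt.+1 * nx.+1) :=
  (1%:M : 'M[R]_nt.+1) *t Hx.
Definition tRst nt nx : 'M[R]_(nt.+1 * nx.+1, nt.+1 * 1) :=
  (1%:M : 'M[R]_nt.+1) *t tRv nx.
Definition tLst nt nx : 'M[R]_(nt.+1 * nx.+1, nt.+1 * 1) :=
  (1%:M : 'M[R]_nt.+1) *t tLv nx.
Definition tBst nt nx : 'M[R]_(nt.+1 * nx.+1, 1 * nx.+1) :=
  tLv nt *t (1%:M : 'M[R]_nx.+1).
Definition tTst nt nx : 'M[R]_(nt.+1 * nx.+1, 1 * nx.+1) :=
  tRv nt *t (1%:M : 'M[R]_nx.+1).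

Definition Dperiodic nt nx (Hx Qx : 'M[R]_nx.+1) : 'M[R]_(nt.+1 * nx.+1) :=
  Dspace nt Hx Qx - 2^-1 *: (invmx (Hspace nt Hx) *m
     (tRst nt nx *m ((tRst nt nx)^T - (tLst nt nx)^T)
      - tLst nt nx *m ((tLst nt nx)^T - (tRst nt nx)^T))).

Definition SATbottom nt nx (Ht : 'M[R]_nt.+1) : 'M[R]_(nt.+1 * nx.+1) :=
  invmx (Htime nx Ht) *m tBst nt nx *m (tBst nt nx)^T.

Definition vavg nv m (w : 'I_nv -> R) (a : 'I_nv -> 'cV[R]_m) : 'cV[R]_m :=
  \sum_(k < nv) w k *: a k.

End Defs.

(* Averaging the kinetic equations with the weights w_k removes every spatial
   term: since <1> = 1 the streaming term <(v/eps) D_x g> cancels the correction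
   eps^-1 <v D_x g>, and since <v> = 0 the coupling to rho vanishes.  What remains is the temporal
   problem (D_t + c + H_t^-1 t_B t_B^T) <g> = H_t^-1 t_B t_B^T <g(0)> = 0 with
   c = sigma_s / eps^2 + sigma_a > 0.  Multiplied by H_t, the operator becomes
   (Q_t + t_B t_B^T + c H_t) (x) I, and by the SBP property the quadratic form of
   the first factor is ((t_T^T y)^2 + (t_B^T y)^2) / 2 + c y^T H_t y, which is
   positive definite; hence the operator is invertible and <g> = 0. *)

From mathcomp Require Import all_boot all_order all_algebra.
From mathcomp Require Import ring lra.
Set Implicit Arguments. Unset Strict Implicit. Unset Printing Implicit Defensive.
Import Order.TTheory GRing.Theory Num.Theory.
Local Open Scope ring_scope.

Section QuadraticForm.
Variable R : comPzRingType.

Definition quadform n (A : 'M[R]_n) (y : 'cV[R]_n) : R := (y^T *m A *m y) 0 0.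

Lemma quadformD n (A B : 'M[R]_n) y :
  quadform (A + B) y = quadform A y + quadform B y.
Proof. by rewrite /quadform mulmxDr mulmxDl mxE. Qed.

Lemma quadformN n (A : 'M[R]_n) y : quadform (- A) y = - quadform A y.
Proof. by rewrite /quadform mulmxN mulNmx mxE. Qed.

Lemma quadformZ n (c : R) (A : 'M[R]_n) y : quadform (c *: A) y = c * quadform A y.
Proof. by rewrite /quadform -scalemxAr -scalemxAl mxE. Qed.

Lemma quadform_tr n (A : 'M[R]_n) y : quadform A^T y = quadform A y.
Proof.
rewrite /quadform.
have -> : y^T *m A^T *m y = (y^T *m A *m y)^T by rewrite !trmx_mul trmxK mulmxA.
by rewrite mxE.
Qed.

Lemma quadform_outer n (t : 'cV[R]_n) y :
  quadform (t *m t^T) y = ((t^T *m y) 0 0) ^+ 2.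
Proof.
rewrite /quadform !mulmxA -mulmxA -[y^T *m t]trmxK trmx_mul trmxK.
by rewrite mxE big_ord1 expr2 [X in X * _]mxE.
Qed.

Lemma quadform_diag n (H : 'M[R]_n) y :
  is_diag_mx H -> quadform H y = \sum_i H i i * y i 0 ^+ 2.
Proof.
move=> /is_diag_mxP Hdiag; rewrite /quadform -mulmxA mxE.
apply: eq_bigr => i _; rewrite !mxE (bigD1 i) //= big1 ?addr0; first by ring.
by move=> j ji; rewrite Hdiag ?mul0r // eq_sym.
Qed.

Lemma quadform_ker n (A : 'M[R]_n) y : A *m y = 0 -> quadform A y = 0.
Proof. by rewrite /quadform -mulmxA => ->; rewrite mulmx0 mxE. Qed.

End QuadraticForm.

Lemma tensmxDl (R : pzRingType) m n p q (A B : 'M[R]_(m, n)) (C : 'M[R]_(p, q)) :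
  (A + B) *t C = A *t C + B *t C.
Proof. by apply/matrixP => i j; rewrite !mxE mulrDl. Qed.

Lemma tensmxZl (R : pzRingType) m n p q (a : R) (A : 'M[R]_(m, n)) (C : 'M[R]_(p, q)) :
  (a *: A) *t C = a *: (A *t C).
Proof. by apply/matrixP => i j; rewrite !mxE mulrA. Qed.

Lemma col_inj_unitmx (F : fieldType) n (A : 'M[F]_n) :
  (forall y : 'cV[F]_n, A *m y = 0 -> y = 0) -> A \in unitmx.
Proof.
move=> Ainj; rewrite -unitmx_tr -row_free_unit; apply: inj_row_free => u uA0.
apply: trmx_inj; rewrite trmx0; apply: Ainj.
by rewrite -[A]trmxK -trmx_mul uA0 trmx0.
Qed.

Section EnergyEstimate.
Variable R : realFieldType.

Lemma quadform_pos_diag_eq0 n (H : 'M[R]_n) y :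
  is_diag_mx H -> (forall i, 0 < H i i) -> quadform H y = 0 -> y = 0.
Proof.
move=> Hdiag Hpos; rewrite quadform_diag // => /eqP.
rewrite psumr_eq0 => [/allP Hy0|i _]; last by rewrite mulr_ge0 ?sqr_ge0 ?ltW.
apply/matrixP => i j; rewrite [j]ord1 mxE; apply/eqP.
have /Hy0 := mem_index_enum i; rewrite implyTb mulf_eq0 (gt_eqF (Hpos i)).
by rewrite sqrf_eq0.
Qed.

Lemma pos_diag_unitmx n (H : 'M[R]_n) :
  is_diag_mx H -> (forall i, 0 < H i i) -> H \in unitmx.
Proof.
move=> Hdiag Hpos; apply: col_inj_unitmx => y /quadform_ker.
exact: quadform_pos_diag_eq0.
Qed.

Variables (n nx : nat) (H Q : 'M[R]_n.+1) (c : R).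
Hypotheses (Hdiag : is_diag_mx H) (Hpos : forall i, 0 < H i i) (c_gt0 : 0 < c).
Hypothesis SBP_Q : Q + Q^T = tRv R n *m (tRv R n)^T - tLv R n *m (tLv R n)^T.

Let K := Q + tLv R n *m (tLv R n)^T + c *: H.

Lemma quadform_SAT_energy y :
  quadform K y *+ 2 = ((tRv R n)^T *m y) 0 0 ^+ 2 + ((tLv R n)^T *m y) 0 0 ^+ 2
                      + (c * quadform H y) *+ 2.
Proof.
have Qsym : quadform Q y *+ 2 = quadform (Q + Q^T) y by rewrite quadformD quadform_tr.
rewrite !quadformD quadformZ !mulrnDl Qsym SBP_Q quadformD quadformN !quadform_outer.
by rewrite mulr2n; ring.
Qed.

Lemma SAT_energy_unitmx : K \in unitmx.
Proof.
apply: col_inj_unitmx => y /quadform_ker /(congr1 (fun r => r *+ 2)).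
rewrite quadform_SAT_energy mul0rn mulr2n => energy0.
apply: (quadform_pos_diag_eq0 Hdiag Hpos).
have cqH0 : 0 <= c * quadform H y.
  rewrite mulr_ge0 ?(ltW c_gt0) // quadform_diag //.
  by apply: sumr_ge0 => i _; rewrite mulr_ge0 ?sqr_ge0 ?ltW.
have := sqr_ge0 (((tRv R n)^T *m y) 0 0); have := sqr_ge0 (((tLv R n)^T *m y) 0 0).
move=> sL2 sR2; have /eqP : c * quadform H y = 0 by nra.
by rewrite mulf_eq0 (gt_eqF c_gt0) => /eqP.
Qed.

Lemma Htime_unitmx : Htime nx H \in unitmx.
Proof. by rewrite tensmx_unit ?unitmx1 ?pos_diag_unitmx. Qed.

Lemma Htime_mulmx_SAT_time :
  Htime nx H *m (Dtime nx H Q + c%:M + SATbottom nx H) = K *t (1%:M : 'M_nx.+1).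
Proof.
have HU : H \in unitmx by exact: pos_diag_unitmx.
rewrite !mulmxDr mul_mx_scalar /SATbottom !mulmxA mulmxV ?Htime_unitmx // mul1mx.
rewrite /Dtime /Htime tensmx_mul mulKVmx // mulmx1 /tBst trmx_tens tensmx_mul trmx1 mulmx1.
by rewrite /K !tensmxDl tensmxZl addrAC.
Qed.

Lemma SAT_time_unitmx : Dtime nx H Q + c%:M + SATbottom nx H \in unitmx.
Proof.
rewrite -(mulKmx Htime_unitmx (_ + _ + _)) Htime_mulmx_SAT_time.
by rewrite unitmx_mul unitmx_inv Htime_unitmx tensmx_unit ?unitmx1 ?SAT_energy_unitmx.
Qed.

End EnergyEstimate.

Section VelocityAverage.
Variables (R : realFieldType) (nv m : nat) (w : 'I_nv -> R).
Implicit Types (f h : 'I_nv -> 'cV[R]_m) (x : 'cV[R]_m).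

Lemma eq_vavg f h : (forall k, f k = h k) -> vavg w f = vavg w h.
Proof. by move=> fh; apply: eq_bigr => k _; rewrite fh. Qed.

Lemma vavgD f h : vavg w (fun k => f k + h k) = vavg w f + vavg w h.
Proof. by rewrite /vavg -big_split; apply: eq_bigr => k _; rewrite scalerDr. Qed.

Lemma vavgN f : vavg w (fun k => - f k) = - vavg w f.
Proof. by rewrite /vavg -sumrN; apply: eq_bigr => k _; rewrite scalerN. Qed.

Lemma vavgB f h : vavg w (fun k => f k - h k) = vavg w f - vavg w h.
Proof. by rewrite vavgD vavgN. Qed.

Lemma vavgZ (a : R) f : vavg w (fun k => a *: f k) = a *: vavg w f.
Proof. by rewrite /vavg scaler_sumr; apply: eq_bigr => k _; rewrite !scalerA mulrC. Qed.

Lemma vavgZr (a : 'I_nv -> R) (b : R) f :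
  vavg w (fun k => (a k * b) *: f k) = b *: vavg w (fun k => a k *: f k).
Proof. by rewrite -vavgZ; apply: eq_vavg => k; rewrite scalerA mulrC. Qed.

Lemma vavg_cst x : vavg w (fun => x) = (\sum_k w k) *: x.
Proof. by rewrite /vavg scaler_suml. Qed.

Lemma vavgZ_cst (a : 'I_nv -> R) x : vavg w (fun k => a k *: x) = (\sum_k w k * a k) *: x.
Proof. by rewrite /vavg scaler_suml; apply: eq_bigr => k _; rewrite scalerA. Qed.

Lemma mulmx_vavg (A : 'M[R]_m) f : vavg w (fun k => A *m f k) = A *m vavg w f.
Proof. by rewrite /vavg mulmx_sumr; apply: eq_bigr => k _; rewrite scalemxAr. Qed.

End VelocityAverage.

Lemma vavg_kinetic (R : realFieldType) (m nv : nat) (Dt Dx S : 'M[R]_m)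
    (v w : 'I_nv -> R) (eps c : R) (rho : 'cV[R]_m) (g g0 : 'I_nv -> 'cV[R]_m) :
  \sum_(k < nv) w k = 1 -> \sum_(k < nv) w k * v k = 0 ->
  (forall k,
     Dt *m g k + (v k / eps) *: (Dx *m g k)
     - eps^-1 *: vavg w (fun j => v j *: (Dx *m g j))
     + (v k / eps ^+ 2) *: (Dx *m rho)
     = - (c *: g k) - S *m (g k - g0 k)) ->
  Dt *m vavg w g + c *: vavg w g + S *m vavg w g = S *m vavg w g0.
Proof.
move=> sw swv /(@eq_vavg _ _ _ w).
rewrite !vavgD !vavgN !mulmx_vavg vavgB !vavgZr vavg_cst vavgZ_cst vavgZ.
rewrite sw swv scale1r scale0r scaler0 addr0.
rewrite addrK mulmxBr => ->.
by rewrite [- _ + _]addrC subrK opprB subrK.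
Qed.

Theorem theorem3p2 (R : realFieldType) (nx nt p_x p_t nv : nat)
  (xs : 'I_nx.+1 -> R) (Hxb Qxb : 'M[R]_nx.+1)
  (ts : 'I_nt.+1 -> R) (Htb Qtb : 'M[R]_nt.+1)
  (v w : 'I_nv -> R) (eps sigma_s sigma_a : R)
  (rho rho0 : 'cV[R]_(nt.+1 * nx.+1)) (g g0 : 'I_nv -> 'cV[R]_(nt.+1 * nx.+1)) :
  SBP xs p_x Hxb Qxb ->
  SBP ts p_t Htb Qtb ->
  \sum_(k < nv) w k = 1 ->
  \sum_(k < nv) w k * v k = 0 ->
  0 < eps -> 0 < sigma_s -> 0 <= sigma_a ->
  vavg w g0 = 0 ->
  let Dt := Dtime nx Htb Qtb in
  let Dxt := Dperiodic nt Hxb Qxb in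
  let S := SATbottom nx Htb in
  Dt *m rho + Dxt *m vavg w (fun k => v k *: g k)
    = - (sigma_a *: rho) - S *m (rho - rho0) ->
  (forall k : 'I_nv,
     Dt *m g k + (v k / eps) *: (Dxt *m g k)
     - eps^-1 *: vavg w (fun j => v j *: (Dxt *m g j))
     + (v k / eps ^+ 2) *: (Dxt *m rho)
     = - ((sigma_s / eps ^+ 2 + sigma_a) *: g k) - S *m (g k - g0 k)) ->
  vavg w g = 0.
Proof.
move=> _ [_ Ht_diag Ht_pos SBP_Qt _] sw swv eps_gt0 sigma_s_gt0 sigma_a_ge0 avg_g0.
move=> Dt Dxt S _ kinetic.
have c_gt0 : 0 < sigma_s / eps ^+ 2 + sigma_a.
  by rewrite ltr_wpDr // divr_gt0 // exprn_gt0.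
have := vavg_kinetic sw swv kinetic; rewrite avg_g0 mulmx0.
have U := SAT_time_unitmx nx Ht_diag Ht_pos c_gt0 SBP_Qt.
rewrite -mul_scalar_mx -!mulmxDl => averaged.
by rewrite -(mulKmx U (vavg w g)) averaged mulmx0.
Qed.
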